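(* Let $d<l$ be positive integers. Let $Y=(\beta\mathbb{N})^l$ with the product topology and coordinatewise operation, and let $S_o=\{(P(1),\ldots,P(l)) : P(x)=\sum_{k=0}^d a_kx^k,\ a_0,\ldots,a_d\in\omega\}$ and $I_o=\{(P(1),\ldots,P(l)) : P(x)=\sum_{k=0}^d a_kx^k,\ a_0,\ldots,a_d\in\mathbb{N}\}$, viewed as subsets of $Y$. Then $S=\mathrm{cl}_Y(S_o)$ is a subsemigroup of $Y$, $I=\mathrm{cl}_Y(I_o)$ is an ideal of $S$, and for every $p\in K(\beta\mathbb{N})$ the constant tuple $(p,p,\ldots,p)$ belongs to $K(S)$ and hence to $I$.
   Context: $\omega=\{0,1,2,\ldots\}$, $\mathbb{N}=\{1,2,\ldots\}$. $\beta\mathbb{N}$ is the Stone–Čech compactification of the discrete space $\mathbb{N}$ (ultrafilters on $\mathbb{N}$), with the usual extension of addition making it a compact right topological semigroup; $\mathbb{N}$ is identified with the principal ultrafilters. $K(T)$ denotes the smallest two-sided ideal of a compact right topological semigroup $T$. *)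

From mathcomp Require Import all_boot.
From mathcomp Require Export classical_sets.
Set Implicit Arguments. Unset Strict Implicit. Unset Printing Implicit Defensive.
Local Open Scope classical_set_scope.

Definition posN : set nat := [set n | (0 < n)%N].

(* Ultrafilters on N, represented as ultrafilters on nat containing N.
   betaN is the set of these. *)
Definition is_ultra (U : set (set nat)) : Prop :=
  [/\ U posN, ~ U set0,
      (forall A B, U A -> A `<=` B -> U B),
      (forall A B, U A -> U B -> U (A `&` B)) &
      (forall A, U A \/ U (~` A))].

Definition betaN : set (set (set nat)) := [set p | is_ultra p].

Definition pr (n : nat) : set (set nat) := [set A | A n].

Definition bplus (p q : set (set nat)) : set (set nat) :=
  [set A | p [set x | q [set y | A (x + y)%N]]].

(* Y = (betaN)^l, points indexed by coordinates 1..l (as 'I_l, coordinate i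
   standing for i.+1) *)
Definition Yset (l : nat) : set ('I_l -> set (set nat)) :=
  [set y | forall i, is_ultra (y i)].
Arguments Yset : clear implicits.

Definition Yplus (l : nat) (y z : 'I_l -> set (set nat)) : 'I_l -> set (set nat) :=
  fun i => bplus (y i) (z i).

(* closure in the product topology (basic open sets prod_i {p | A_i \in p}) *)
Definition Ycl (l : nat) (X : set ('I_l -> set (set nat))) :
    set ('I_l -> set (set nat)) :=
  [set y | Yset l y /\
     forall A : 'I_l -> set nat, (forall i, y i (A i)) ->
       exists2 x, X x & forall i, x i (A i)].

Definition is_subsemigroup (T : Type) (op : T -> T -> T) (U S : set T) : Prop :=
  [/\ S !=set0, S `<=` U & forall x y, S x -> S y -> S (op x y)].

Definition is_ideal (T : Type) (op : T -> T -> T) (S J : set T) : Prop :=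
  [/\ J !=set0, J `<=` S &
      forall x y, S x -> J y -> J (op x y) /\ J (op y x)].

Definition smallest_ideal (T : Type) (op : T -> T -> T) (S : set T) : set T :=
  [set x | forall J, is_ideal op S J -> J x].

Definition poly_tuple (d l : nat) (a : 'I_d.+1 -> nat) : 'I_l -> set (set nat) :=
  fun i => pr (\sum_(k < d.+1) a k * (i.+1) ^ k)%N.

(* S_o : coefficients in omega; the zero polynomial is excluded since
   (0,...,0) is not a point of Y *)
Definition So (d l : nat) : set ('I_l -> set (set nat)) :=
  [set y | exists a : 'I_d.+1 -> nat, (exists k, (0 < a k)%N) /\ y = @poly_tuple d l a].

Definition Io (d l : nat) : set ('I_l -> set (set nat)) :=
  [set y | exists a : 'I_d.+1 -> nat, (forall k, (0 < a k)%N) /\ y = @poly_tuple d l a].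

Arguments So : clear implicits.
Arguments Io : clear implicits.
Arguments Ycl : clear implicits.
Arguments Yplus : clear implicits.
Arguments poly_tuple : clear implicits.

From mathcomp Require Import all_boot classical_sets boolp filter.
Set Implicit Arguments. Unset Strict Implicit. Unset Printing Implicit Defensive.
Local Open Scope classical_set_scope.

(* Y is a compact right topological semigroup in which left translation by a
   point of N^l is continuous, so the closures of S_o and I_o inherit their
   algebraic properties.  Constant polynomials put the whole diagonal
   {(r,...,r) | r in betaN} into S.  If e is a minimal idempotent of betaN,
   Ellis' lemma applied in a minimal left ideal of S produces an idempotent
   q <= (e,...,e) lying in every ideal of S; each coordinate of q is an
   idempotent below e, hence equals e.  Finally, for an ideal J of S the set
   {r | (r,...,r) in J} is an ideal of betaN containing e, so it contains
   K(betaN). *)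

Lemma ultra_proper u : is_ultra u -> ProperFilter u.
Proof.
case=> uN u0 uS uI _; split => //; split => // [|A B AB uA].
- exact: uS uN _.
- exact: uS uA AB.
Qed.

Lemma ultra_posN u : is_ultra u -> u posN.
Proof. by case. Qed.

Lemma ultra_setC u A : is_ultra u -> u A \/ u (~` A).
Proof. by case=> _ _ _ _. Qed.

Lemma ultra_eq u v : is_ultra u -> is_ultra v -> u `<=` v -> u = v.
Proof.
move=> uU vU uv; have vF := ultra_proper vU.
apply/seteqP; split => // A vA; have [//|/uv vnA] := ultra_setC A uU.
by case: (filter_not_empty v); rewrite -(setICr A); exact: filterI.
Qed.

Lemma pr_ultra n : (0 < n)%N -> is_ultra (pr n).
Proof.
move=> n0; split => // [A B + AB|A]; first exact: AB.
by have [An|nAn] := pselect (A n); [left|right].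
Qed.

Lemma bplus_ultra p q : is_ultra p -> is_ultra q -> is_ultra (bplus p q).
Proof.
move=> pU qU; have pF := ultra_proper pU; have qF := ultra_proper qU.
split.
- apply: (@filterE _ p _) => x; apply: filterS (ultra_posN qU) => y y0.
  by rewrite /posN /= addn_gt0 y0 orbT.
- by move=> /(@filter_ex _ p _)[x /filter_ex[]].
- by move=> A B + AB; apply: (@filterS _ p _) => x; apply: filterS => y /AB.
- by move=> A B; apply: (@filterS2 _ p _) => x; exact: filterI.
- move=> A; have [|pnA] := ultra_setC [set x | q [set y | A (x + y)%N]] pU; first by left.
  by right; apply: filterS pnA => x /= nqA; have [|] := ultra_setC [set y | A (x + y)%N] qU.
Qed.

Lemma bplusA p q r : bplus (bplus p q) r = bplus p (bplus q r).
Proof.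
apply: funext => A; rewrite /bplus /=; congr p; apply: funext => x.
by congr q; apply: funext => y; congr r; apply: funext => z; rewrite /= addnA.
Qed.

Lemma bplus_pr m n : bplus (pr m) (pr n) = pr (m + n).
Proof. by []. Qed.

Lemma ultra_lim (X : Type) (U : set_system X) (f : X -> set (set nat)) :
  UltraFilter U -> U [set x | is_ultra (f x)] ->
  is_ultra [set A | U [set x | f x A]].
Proof.
move=> UU Uf; split.
- by apply: filterS Uf => x /ultra_posN.
- move=> /= U0; apply: (filter_not_empty U).
  by apply: (filterS2 _ _ U0 Uf) => x fx0 /ultra_proper fF; exact: filter_not_empty fx0.
- move=> A B /= UA AB; apply: (filterS2 _ _ UA Uf) => x fxA /ultra_proper fF.
  exact: filterS fxA.
- move=> A B /= UA UB; apply: (filterS3 _ _ UA UB Uf) => x fxA fxB /ultra_proper fF.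
  exact: filterI.
- move=> A; have [|UnA] := in_ultra_setVsetC [set x | f x A] UU; first by left.
  right; apply: (filterS2 _ _ UnA Uf) => x nfxA fU /=.
  by have [|] := ultra_setC A fU.
Qed.

Lemma ex_minimal_set (X : Type) (P : set (set X)) A0 : P A0 ->
  (forall F, F !=set0 -> F `<=` P -> total_on F subset -> P (\bigcap_(C in F) C)) ->
  exists2 B, P B & forall C, P C -> C `<=` B -> B `<=` C.
Proof.
move=> PA0 Pcap.
pose R (A B : {A | P A}) := `[< sval B `<=` sval A >].
have [||F Ftot|B Bmin] := ZL_preorder (exist _ A0 PA0) (R := R).
- by move=> A; apply/asboolP.
- by move=> A B C /asboolP BA /asboolP CB; apply/asboolP; exact: subset_trans CB BA.
- have [[A FA]|F0] := pselect (F !=set0); last first.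
    by exists (exist _ A0 PA0) => A FA; case: F0; exists A.
  have PG : P (\bigcap_(C in [set sval A | A in F]) C).
    apply: Pcap => [|_ [C _ <-]|_ _ [C FC <-] [D FD <-]]; first by exists (sval A), A.
    - exact: svalP.
    - by have [/asboolP|/asboolP] := Ftot _ _ FC FD; [right|left].
  by exists (exist _ _ PG) => C FC; apply/asboolP => x /(_ (sval C)); apply; exists C.
exists (sval B); first exact: svalP.
by move=> C PC CB; apply/asboolP/(Bmin (exist _ C PC)); apply/asboolP.
Qed.

Section ProductSpace.
Variable l : nat.
Local Notation T := ('I_l -> set (set nat)).
Local Notation add := (Yplus l).

Lemma YplusA x y z : add (add x y) z = add x (add y z).
Proof. by apply: funext => i; rewrite /Yplus bplusA. Qed.

Lemma Yplus_set x y : Yset l x -> Yset l y -> Yset l (add x y).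
Proof. by move=> xY yY i; exact: bplus_ultra. Qed.

Definition closedY (C : set T) := C `<=` Yset l /\ Ycl l C `<=` C.

Definition box (A : 'I_l -> set nat) : set T := [set y | Yset l y /\ forall i, y i (A i)].

Definition coord_box i (A : set nat) : 'I_l -> set nat :=
  fun j => if j == i then A else setT.

Lemma coord_boxP (y : T) i A : Yset l y -> (forall j, y j (coord_box i A j)) <-> y i A.
Proof.
move=> yY; split => [/(_ i)|yA j]; first by rewrite /coord_box eqxx.
rewrite /coord_box; case: eqP => [->//|_].
by have yF := ultra_proper (yY j); exact: filterT.
Qed.

Lemma Ycl_mono (X X' : set T) : X `<=` X' -> Ycl l X `<=` Ycl l X'.
Proof. by move=> XX' y [yY yX]; split => // A /yX[x /XX' X'x xA]; exists x. Qed.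

Lemma Ycl_sub (X : set T) : X `<=` Yset l -> X `<=` Ycl l X.
Proof. by move=> XY x Xx; split => [|A xA]; [exact: XY | exists x]. Qed.

Lemma Ycl_closed (X : set T) : closedY (Ycl l X).
Proof. by split => [y []//|y [yY ycl]]; split => // A /ycl[x [_ xcl]]; exact: xcl. Qed.

Lemma closedI (C D : set T) : closedY C -> closedY D -> closedY (C `&` D).
Proof.
move=> [CY clC] [DY clD]; split => [x [Cx _]|y yCD]; first exact: CY.
by split; [apply: clC | apply: clD]; apply: Ycl_mono yCD => x [].
Qed.

Lemma closed_bigcap (F : set (set T)) : F !=set0 -> (forall C, F C -> closedY C) ->
  closedY (\bigcap_(C in F) C).
Proof.
move=> [C0 FC0] Fcl; split => [x /(_ C0 FC0)|y ycl C FC]; first exact: (Fcl _ FC0).1.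
by apply: (Fcl _ FC).2; apply: Ycl_mono ycl => x /(_ C FC).
Qed.

Lemma box_closed A : closedY (box A).
Proof.
split => [y []//|y [yY ycl]]; split => // i.
have [//|ynA] := ultra_setC (A i) (yY i).
have [x [xY xA]] := ycl _ (proj2 (coord_boxP _ _ yY) ynA).
move=> /(coord_boxP _ _ xY) xnA; have xF := ultra_proper (xY i).
by case: (filter_not_empty (x i)); rewrite -(setICr (A i)); exact: filterI.
Qed.

Lemma compactY (F : set (set T)) : F !=set0 ->
  (forall C, F C -> closedY C /\ C !=set0) ->
  (forall C1 C2, F C1 -> F C2 -> exists2 C3, F C3 & C3 `<=` C1 `&` C2) ->
  exists y, forall C, F C -> C y.
Proof.
move=> [C0 FC0] Fne Fdir.
have GFF : Filter (filter_from F id) by apply: filter_from_filter; [exists C0 | exact: Fdir].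
have GF : ProperFilter (filter_from F id) by apply: filter_from_proper => C /Fne[].
have [U [UU FU]] := ultraFilterLemma GF.
have UF C : F C -> U C by move=> FC; apply: FU; exists C.
pose y : T := fun i => [set A | U [set x : T | x i A]].
have yY : Yset l y.
  move=> i; apply: ultra_lim; apply: filterS (UF _ FC0) => x C0x.
  exact: (Fne _ FC0).1.1 _ C0x i.
exists y => C FC; apply: (Fne _ FC).1.2; split => // A yA.
have /filter_ex[x [xC xA]] : U (C `&` [set x | forall i, x i (A i)]).
  by apply: filterI; [exact: UF | exact: filter_forall].
by exists x.
Qed.

Lemma ex_minimal_closed (P : set T -> Prop) C0 :
  closedY C0 -> C0 !=set0 -> P C0 ->
  (forall F, F !=set0 -> (forall C, F C -> P C) -> P (\bigcap_(C in F) C)) ->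
  exists2 B, [/\ closedY B, B !=set0 & P B] &
    forall C, closedY C -> C !=set0 -> P C -> C `<=` B -> B `<=` C.
Proof.
move=> C0cl C0ne PC0 Pcap.
have [|F Fne FP Ftot|B PB Bmin] :=
  ex_minimal_set (A0 := C0) (P := fun C => [/\ closedY C, C !=set0 & P C]).
- by [].
- split; first by apply: closed_bigcap => // C /FP[].
  + have [y Fy] : exists y, forall C, F C -> C y.
      apply: compactY => // [C /FP[]//|C1 C2 FC1 FC2].
      have [C12|C21] := Ftot _ _ FC1 FC2.
        by exists C1 => // x C1x; split => //; exact: C12.
      by exists C2 => // x C2x; split => //; exact: C21.
    by exists y.
  + by apply: Pcap => // C /FP[].
- by exists B => // C Ccl Cne PC; apply: Bmin.
Qed.

Lemma rtrans_closed (C : set T) x : closedY C -> Yset l x ->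
  closedY [set add c x | c in C].
Proof.
move=> [CY clC] xY; split => [_ [c Cc <-]|y [yY ycl]].
  exact: Yplus_set (CY _ Cc) xY.
pose D A := C `&` [set c | Yset l c /\ forall i, add c x i (A i)].
have yT : forall i, y i setT by move=> i; have yF := ultra_proper (yY i); exact: filterT.
have [b bD] : exists b, forall E, [set D A | A in [set A | forall i, y i (A i)]] E -> E b.
  apply: compactY => [|_ [A yA <-]|_ _ [A yA <-] [B yB <-]].
  - by exists (D (fun=> setT)), (fun=> setT).
  - split.
      (* the condition on [c + x] is a box condition on [c] *)
      exact: closedI (conj CY clC)
        (box_closed (fun i => [set n | x i [set m | A i (n + m)%N]])).
    by have [_ [c Cc <-] cxA] := ycl A yA; exists c; split => //; split => //; exact: CY.
  - exists (D (fun i => A i `&` B i)).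
      by exists (fun i => A i `&` B i) => // i; have yF := ultra_proper (yY i); exact: filterI.
    move=> c [Cc [cY cxAB]]; split; split => //; split => // i;
      have cxF : ProperFilter (add c x i) := ultra_proper (Yplus_set cY xY i);
      by apply: filterS (cxAB i) => ? [].
have [Cb [bY _]] : D (fun=> setT) b by apply: bD; exists (fun=> setT).
exists b => //; apply: funext => i; apply/esym/ultra_eq => [||A yA]; first exact: yY.
  exact: Yplus_set.
have [_ [_ bxA]] : D (coord_box i A) b.
  by apply: bD; exists (coord_box i A) => //; exact/coord_boxP.
exact/(coord_boxP _ _ (Yplus_set bY xY)).
Qed.

Lemma fix_closed x : Yset l x -> closedY [set y | Yset l y /\ add y x = x].
Proof.
move=> xY; split => [y []//|y [yY ycl]]; split => //; apply: funext => i.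
apply: ultra_eq (Yplus_set yY xY i) (xY i) _ => A yxA.
have [z [zY zx] zA] := ycl _ (proj2 (coord_boxP _ _ yY) yxA).
by rewrite -[x in x i A]zx; exact: (proj1 (coord_boxP _ _ zY) zA).
Qed.

(* Left translation by a principal tuple is continuous. *)
Lemma Ycl_Yplus (X Z W : set T) y z :
  X `<=` [set x | exists n : 'I_l -> nat, x = fun i => pr (n i)] ->
  (forall x z, X x -> Z z -> W (add x z)) ->
  Ycl l X y -> Ycl l Z z -> Ycl l W (add y z).
Proof.
move=> Xpr XZW [yY ycl] [zY zcl]; split => [|A yzA]; first exact: Yplus_set.
have [x Xx xA] := ycl _ yzA; have [n nE] := Xpr _ Xx; subst x.
have [z' Zz' z'A] := zcl (fun i => [set m | A i (n i + m)%N]) xA.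
by exists (add (fun i => pr (n i)) z'); first exact: XZW.
Qed.

Definition add_closed (U : set T) := forall x y, U x -> U y -> U (add x y).

Definition left_ideal (U L : set T) := forall u y, U u -> L y -> L (add u y).

Lemma ellis (U : set T) : closedY U -> U !=set0 -> add_closed U ->
  exists2 e, U e & add e e = e.
Proof.
move=> Ucl Une Uadd.
have [|B [Bcl [x Bx] [BU Badd]] Bmin] :=
  ex_minimal_closed (P := fun B => B `<=` U /\ add_closed B) Ucl Une
    (conj (@subset_refl _ U) Uadd).
  move=> F [C FC] FP; split => [y /(_ C FC)|y z Fy Fz D FD]; first exact: (FP _ FC).1.
  by apply: (FP _ FD).2; [exact: Fy | exact: Fz].
have xY : Yset l x := Bcl.1 _ Bx.
have BBx : B `<=` [set add b x | b in B].
  apply: Bmin.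
  - exact: rtrans_closed.
  - by exists (add x x), x.
  - split => [_ [b Bb <-]|_ _ [b Bb <-] [c Bc <-]]; first exact/BU/Badd.
    by exists (add (add b x) c); [exact/Badd/Bc/Badd | rewrite YplusA].
  - by move=> _ [b Bb <-]; exact: Badd.
have BZ : B `<=` B `&` [set y | Yset l y /\ add y x = x].
  apply: Bmin => [||| ? []//].
  - by apply: closedI => //; exact: fix_closed.
  - have [b Bb bx] := BBx _ Bx; exists b; split => //; split => //; exact: Bcl.1.
  - split => [y [/BU]//|y z [By [yY yx]] [Bz [zY zx]]]; split; first exact: Badd.
    by split; [exact: Yplus_set | rewrite YplusA zx yx].
by have [_ [_ xx]] := BZ _ Bx; exists x => //; exact: BU.
Qed.

Lemma ex_minimal_left_ideal (U : set T) e : closedY U -> add_closed U -> U e ->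
  exists2 L, [/\ closedY L, L !=set0, L `<=` [set add u e | u in U] & left_ideal U L] &
    forall x, L x -> L `<=` [set add u x | u in U].
Proof.
move=> Ucl Uadd Ue.
have Ulid y : Yset l y -> left_ideal U [set add u y | u in U].
  by move=> yY u _ Uu [v Uv <-]; exists (add u v); [exact: Uadd | rewrite YplusA].
have eY : Yset l e := Ucl.1 _ Ue.
have [|L [Lcl Lne [LUe Lid]] Lmin] :=
  ex_minimal_closed (P := fun L => L `<=` [set add u e | u in U] /\ left_ideal U L)
    (rtrans_closed Ucl eY) (ex_intro _ (add e e) (ex_intro2 _ _ e Ue erefl))
    (conj (@subset_refl _ _) (Ulid e eY)).
  move=> F [C FC] FP; split => [y /(_ C FC)|u y Uu Fy D FD]; first exact: (FP _ FC).1.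
  by apply: (FP _ FD).2; [exact: Uu | exact: Fy].
exists L => // x Lx; have xY : Yset l x := Lcl.1 _ Lx.
apply: Lmin.
- exact: rtrans_closed.
- by exists (add e x), e.
- split; last exact: Ulid.
  by move=> _ [u Uu <-]; exact/LUe/Lid.
- by move=> _ [u Uu <-]; exact: Lid.
Qed.

Definition minimal_idem (U : set T) q := [/\ U q, add q q = q &
  forall f, U f -> add f f = f -> add f q = f -> add q f = f -> f = q].

Lemma ex_minimal_idem_below (U : set T) e : closedY U -> add_closed U -> U e ->
  add e e = e -> exists q, [/\ minimal_idem U q, add q e = q, add e q = q &
    forall J, is_ideal add U J -> J q].
Proof.
move=> Ucl Uadd Ue ee.
have [L [Lcl Lne LUe Lid] Lmin] := ex_minimal_left_ideal Ucl Uadd Ue.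
have LU : L `<=` U by move=> _ /LUe[u Uu <-]; exact: Uadd.
have [u Lu uu] := ellis Lcl Lne (fun x y Lx Ly => Lid _ _ (LU _ Lx) Ly).
have ue : add u e = u by have [v _ <-] := LUe _ Lu; rewrite YplusA ee.
have Lq : L (add e u) := Lid _ _ Ue Lu.
set q := add e u in Lq *; have Uq : U q := LU _ Lq.
exists q; split.
- split => // [|f Uf ff fq qf]; first by rewrite /q YplusA -[add u (add e u)]YplusA ue uu.
  have Lf : L f by rewrite -fq; exact: Lid.
  have [s _ sf] := Lmin _ Lf _ Lq.
  by rewrite -qf -sf YplusA ff.
- by rewrite /q YplusA ue.
- by rewrite /q -YplusA ee.
- move=> J [[j Jj] JU Jid].
  have [s Us sjq] := Lmin _ (Lid _ _ (JU _ Jj) Lq) _ Lq.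
  by rewrite -sjq; apply: (Jid _ _ Us _).1; exact: (Jid _ _ Uq Jj).2.
Qed.

End ProductSpace.

Lemma ex_minimal_idem_betaN : exists e, [/\ is_ultra e, bplus e e = e &
  forall f, is_ultra f -> bplus f f = f -> bplus f e = f -> bplus e f = f -> f = e].
Proof.
(* betaN is Y for l = 1. *)
have Y1cl : closedY (Yset 1) by split => // y [].
have Y1add : add_closed (Yset 1) by move=> x y; exact: Yplus_set.
have Y1ne : Yset 1 !=set0 by exists (fun=> pr 1) => _; exact: pr_ultra.
have [e0 Ye0 e0e0] := ellis Y1cl Y1ne Y1add.
have [q [[Yq qq qmin] _ _ _]] := ex_minimal_idem_below Y1cl Y1add Ye0 e0e0.
have qE : q = fun=> q ord0 by apply: funext => i; rewrite (ord1 i).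
rewrite qE in qq qmin; exists (q ord0); split => [||f fU ff fe ef].
- exact: Yq.
- exact: (congr1 (fun g => g ord0) qq).
- have := qmin (fun=> f) (fun=> fU); rewrite /Yplus ff fe ef => /(_ erefl erefl erefl).
  by move/(congr1 (fun g => g ord0)).
Qed.

Section Diagonal.
Variables (l : nat) (S : set ('I_l -> set (set nat))).
Hypotheses (Scl : closedY S) (Sadd : add_closed S)
  (Sdiag : forall r, is_ultra r -> S (fun=> r)).

Lemma diag_in_every_ideal : exists e, is_ultra e /\
  forall J, is_ideal (Yplus l) S J -> J (fun=> e).
Proof.
have [e [eU ee emin]] := ex_minimal_idem_betaN.
have eeY : Yplus l (fun=> e) (fun=> e) = fun=> e by rewrite /Yplus ee.
have [q [[Sq qq _] qe eqq qJ]] := ex_minimal_idem_below Scl Sadd (Sdiag eU) eeY.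
suff qE : q = fun=> e by exists e; split => // J /qJ; rewrite qE.
apply: funext => i; apply: emin.
- exact: Scl.1 _ Sq i.
- exact: (congr1 (fun g => g i) qq).
- exact: (congr1 (fun g => g i) qe).
- exact: (congr1 (fun g => g i) eqq).
Qed.

Lemma diag_smallest_ideal p : smallest_ideal bplus betaN p ->
  smallest_ideal (Yplus l) S (fun=> p).
Proof.
move=> Kp J Jideal; have [_ _ Jid] := Jideal.
have [e [eU eJ]] := diag_in_every_ideal.
suff [] : [set r | is_ultra r /\ J (fun=> r)] p by [].
apply: Kp; split => [|r []//|r s rU [sU Js]].
- by exists e; split => //; exact: eJ.
- have [Jrs Jsr] := Jid _ _ (Sdiag rU) Js.
  by split; split => //; exact: bplus_ultra.
Qed.

End Diagonal.

Section PolynomialTuples.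
Variables d l : nat.

Lemma poly_tuple_pos (a : 'I_d.+1 -> nat) j : (0 < a j)%N ->
  forall i : 'I_l, (0 < \sum_(k < d.+1) a k * i.+1 ^ k)%N.
Proof.
move=> ak0 i; rewrite (bigD1 j) //= addn_gt0.
by rewrite muln_gt0 ak0 expn_gt0.
Qed.

Lemma poly_tupleD (a b : 'I_d.+1 -> nat) :
  Yplus l (poly_tuple d l a) (poly_tuple d l b) = poly_tuple d l (fun k => a k + b k)%N.
Proof.
apply: funext => i; rewrite /Yplus /poly_tuple bplus_pr -big_split /=.
by congr pr; apply: eq_bigr => k _; rewrite mulnDl.
Qed.

Lemma So_Yset : So d l `<=` Yset l.
Proof. by move=> _ [a [[k ak0] ->]] i; exact/pr_ultra/(poly_tuple_pos ak0). Qed.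

Lemma Io_So : Io d l `<=` So d l.
Proof. by move=> _ [a [a0 ->]]; exists a; split => //; exists ord0. Qed.

Lemma So_pr : So d l `<=` [set x | exists n : 'I_l -> nat, x = fun i => pr (n i)].
Proof. by move=> _ [a [_ ->]]; eexists. Qed.

Lemma clSo_subsemigroup : is_subsemigroup (Yplus l) (Yset l) (Ycl l (So d l)).
Proof.
split => [|y []//|x y Sx Sy].
- exists (poly_tuple d l (fun=> 1%N)); apply: Ycl_sub; first exact: So_Yset.
  by exists (fun=> 1%N); split => //; exists ord0.
- apply: Ycl_Yplus Sx Sy; first exact: So_pr.
  move=> _ _ [a [[k ak0] ->]] [b [_ ->]]; rewrite poly_tupleD.
  by exists (fun k => a k + b k)%N; split => //; exists k; rewrite addn_gt0 ak0.
Qed.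

Lemma clIo_ideal : is_ideal (Yplus l) (Ycl l (So d l)) (Ycl l (Io d l)).
Proof.
split => [||x y Sx Iy]; last split.
- exists (poly_tuple d l (fun=> 1%N)); apply: Ycl_sub.
    by move=> x /Io_So; exact: So_Yset.
  by exists (fun=> 1%N).
- exact/Ycl_mono/Io_So.
- apply: Ycl_Yplus Sx Iy; first exact: So_pr.
  move=> _ _ [a [_ ->]] [b [b0 ->]]; rewrite poly_tupleD.
  by exists (fun k => a k + b k)%N; split => // k; rewrite addn_gt0 b0 orbT.
- apply: Ycl_Yplus Iy Sx; first exact: subset_trans Io_So So_pr.
  move=> _ _ [a [a0 ->]] [b [_ ->]]; rewrite poly_tupleD.
  by exists (fun k => a k + b k)%N; split => // k; rewrite addn_gt0 a0.
Qed.

Lemma const_in_clSo r : is_ultra r -> Ycl l (So d l) (fun=> r).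
Proof.
move=> rU; split => // A rA; have rF := ultra_proper rU.
have /filter_ex[n [n0 nA]] : r (posN `&` [set n | forall i, A i n]).
  by apply: filterI; [exact: ultra_posN | exact: filter_forall].
exists (fun=> pr n) => //.
exists (fun k => if k == ord0 then n else 0%N); split; first by exists ord0; rewrite eqxx.
apply: funext => i; rewrite /poly_tuple big_ord_recl big1 ?addn0 ?expn0 ?muln1 //.
Qed.

End PolynomialTuples.

Theorem mainTheorem6 (d l : nat) (hd : (0 < d)%N) (hdl : (d < l)%N) :
  is_subsemigroup (Yplus l) (Yset l) (Ycl l (So d l)) /\
  is_ideal (Yplus l) (Ycl l (So d l)) (Ycl l (Io d l)) /\
  (forall p : set (set nat), smallest_ideal bplus betaN p ->
     smallest_ideal (Yplus l) (Ycl l (So d l)) (fun _ : 'I_l => p) /\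
     Ycl l (Io d l) (fun _ : 'I_l => p)).
Proof.
have [_ _ Sadd] := clSo_subsemigroup d l.
split; first exact: clSo_subsemigroup.
split; first exact: clIo_ideal.
move=> p Kp.
have KSp := diag_smallest_ideal (Ycl_closed (So d l)) Sadd (@const_in_clSo d l) Kp.
by split; last exact: KSp _ (clIo_ideal d l).
Qed.
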